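(* Let $(J,\mu)$ be a standard Borel space with a finite Borel measure $\mu$, and let $\mathcal{I}$ be a family of Borel subsets of $J$ satisfying: (I0) $\mathcal{I}$ is closed under taking (Borel) subsets; (I1) if $I_1\subseteq I_2\subseteq\cdots$ with $I_n\in\mathcal{I}$ for all $n$, then $\bigcup_n I_n\in\mathcal{I}$; (I2) for all $I_1,I_2\in\mathcal{I}$ with $\mu(I_1)<\mu(I_2)$ there exists $I_3\in\mathcal{I}$ with $I_1\subseteq I_3\subseteq I_1\cup I_2$ and $\mu(I_3)>\mu(I_1)$. Define $r(A)=\sup\{\mu(I): I\in\mathcal{I},\ I\subseteq A\}$ for Borel $A\subseteq J$. Then $r$ is submodular: $r(A)+r(B)\ge r(A\cap B)+r(A\cup B)$ for all Borel $A,B\subseteq J$. *)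

From HB Require Import structures.
From mathcomp Require Import all_boot all_order all_algebra.
From mathcomp Require Import all_classical all_reals all_analysis.
Set Implicit Arguments. Unset Strict Implicit. Unset Printing Implicit Defensive.
Import Order.TTheory GRing.Theory Num.Theory.
Local Open Scope classical_set_scope.
Local Open Scope ring_scope.

Definition is_metric (R : realType) (T : Type) (dist : T -> T -> R) : Prop :=
  (forall x y, 0 <= dist x y) /\
  (forall x y, dist x y = 0 <-> x = y) /\
  (forall x y, dist x y = dist y x) /\
  (forall x y z, dist x z <= dist x y + dist y z).

Definition metric_open (R : realType) (T : Type) (dist : T -> T -> R)
  (U : set T) : Prop :=
  forall x, U x -> exists2 e : R, 0 < e & [set y | dist x y < e] `<=` U.

Definition metric_complete (R : realType) (T : Type) (dist : T -> T -> R) : Prop :=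
  forall u : nat -> T,
    (forall e : R, 0 < e -> exists N : nat, forall n m, (N <= n)%N -> (N <= m)%N ->
        dist (u n) (u m) < e) ->
    exists l : T, forall e : R, 0 < e -> exists N : nat, forall n, (N <= n)%N ->
        dist (u n) l < e.

Definition metric_separable (R : realType) (T : Type) (dist : T -> T -> R) : Prop :=
  exists D : set T, countable D /\
    forall x (e : R), 0 < e -> exists2 y, D y & dist x y < e.

Definition standard_borel (R : realType) (d : measure_display)
  (T : measurableType d) : Prop :=
  exists dist : T -> T -> R,
    [/\ is_metric dist, metric_complete dist, metric_separable dist &
        (@measurable d T) = <<s metric_open dist >>].

Definition rank_fun (R : realType) (d : measure_display) (T : measurableType d)
  (mu : set T -> \bar R) (Ifam : set (set T)) (A : set T) : \bar R :=
  ereal_sup [set mu I | I in [set I | Ifam I /\ I `<=` A]].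

From HB Require Import structures.
From mathcomp Require Import all_boot all_order all_algebra.
From mathcomp Require Import all_classical all_reals all_analysis.
Import Order.TTheory GRing.Theory Num.Theory.
Local Open Scope classical_set_scope.
Local Open Scope ring_scope.

(* Every I in the family extends, inside any C, to a U of measure r(C): a greedy
   nested sequence, each step coming within 1/(n+1) of the best possible
   extension, has a union U in the family that no extension inside C can beat
   in measure; the exchange axiom (I2) then forces mu U = r(C).  With such
   "bases" V of A ∩ B and U ⊇ V of A ∪ B, the sets U ∩ A and U ∩ B witness
   r(A) + r(B) >= mu(U ∩ A) + mu(U ∩ B) = mu U + mu(U ∩ A ∩ B)
   >= r(A ∪ B) + r(A ∩ B). *)

Lemma measureUI_fin (R : realType) (d : measure_display) (T : measurableType d)
    (mu : {finite_measure set T -> \bar R}) (A B : set T) :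
  measurable A -> measurable B ->
  (mu (A `|` B) + mu (A `&` B) = mu A + mu B)%E.
Proof.
move=> mA mB; rewrite measureUfinl ?ltey_eq ?fin_num_measure //.
by rewrite subeK // fin_num_measure //; apply: measurableI.
Qed.

Section measure_maximal.
Context {R : realType} {d : measure_display} {T : measurableType d}.
Context (mu : {finite_measure set T -> \bar R}) (P : set (set T)).
Hypothesis P_measurable : forall K, P K -> measurable K.
Hypothesis P_nondecreasing_bigcup : forall F : nat -> set T,
  (forall n, P (F n)) -> (forall n m, (n <= m)%N -> F n `<=` F m) ->
  P (\bigcup_n F n).

Let sup_above K := ereal_sup [set mu L | L in [set L | P L /\ K `<=` L]].

Let sup_above_fin_num K : P K -> sup_above K \is a fin_num.
Proof.
move=> PK; rewrite ge0_fin_numE.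
  apply: (@le_lt_trans _ _ (mu setT)); last by rewrite ltey_eq fin_num_measure.
  apply: ge_ereal_sup => _ [L [PL _] <-].
  by apply: le_measure; rewrite ?inE //; exact: P_measurable.
apply: (@le_trans _ _ (mu K)); first exact: measure_ge0.
by apply: ereal_sup_ubound; exists K => //; split.
Qed.

Let near_sup_above K (e : R) : P K -> 0 < e ->
  exists K', [/\ P K', K `<=` K' & (sup_above K < mu K' + e%:E)%E].
Proof.
move=> PK e0.
have : (sup_above K - e%:E < sup_above K)%E.
  by rewrite -(fineK (sup_above_fin_num _ PK)) -EFinB lte_fin ltrBlDr ltrDl.
move=> /ereal_sup_gt[_ [K' [PK' KK'] <-]].
by rewrite lteBlDr // => lt; exists K'.
Qed.

Lemma exists_measure_maximal K : P K ->
  exists U, [/\ P U, K `<=` U & forall L, P L -> U `<=` L -> (mu L <= mu U)%E].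
Proof.
move=> PK.
have /choice[next nextP] : forall nK : nat * set T, exists K', P nK.2 ->
    [/\ P K', nK.2 `<=` K' & (sup_above nK.2 < mu K' + nK.1.+1%:R^-1%:E)%E].
  case=> n K0; have [PK0|] := pselect (P K0); last by exists K0.
  have [|K' ?] := near_sup_above _ n.+1%:R^-1 PK0; first by rewrite invr_gt0.
  by exists K'.
pose F n := iteri n (fun n K0 => next (n, K0)) K.
have F_step n : P (F n) /\ [/\ P (F n.+1), F n `<=` F n.+1 &
    (sup_above (F n) < mu (F n.+1) + n.+1%:R^-1%:E)%E].
  elim: n => [|n [_ [PFn1 _ _]]]; first by split; last exact: (nextP (0, K)).
  by split; last exact: (nextP (n.+1, F n.+1)).
have F_nondecreasing : forall n m, (n <= m)%N -> F n `<=` F m.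
  apply: (homo_leq (@subset_refl T) (@subset_trans T)) => n.
  by have [_ []] := F_step n.
have PU : P (\bigcup_n F n).
  by apply: P_nondecreasing_bigcup => // n; case: (F_step n).
exists (\bigcup_n F n); split => [//|x Kx|L PL UL]; first by exists 0%N.
apply/lee_addgt0Pr => e e0.
have [n] := ltr_add_invr e0; rewrite add0r => ne.
have [_ [PFn1 _ sup_lt]] := F_step n.
have mu_le_sup : (mu L <= sup_above (F n))%E.
  by apply: ereal_sup_ubound; exists L => //; split => // x Fx; apply/UL; exists n.
have mu_Fn1_le : (mu (F n.+1) <= mu (\bigcup_n F n))%E.
  by apply: le_measure; rewrite ?inE; [exact: P_measurable..|exact: bigcup_sup].
apply: (le_trans mu_le_sup); apply: (le_trans (ltW sup_lt)).
by apply: leeD => //; rewrite lee_fin ltW.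
Qed.

End measure_maximal.

Section rank_fun.
Context {R : realType} {d : measure_display} {J : measurableType d}.
Context {mu : {finite_measure set J -> \bar R}} {Ifam : set (set J)}.
Hypothesis Ifam_measurable : forall I, Ifam I -> measurable I.
Hypothesis Ifam_nondecreasing_bigcup : forall F : nat -> set J,
  (forall n, Ifam (F n)) -> (forall n m, (n <= m)%N -> F n `<=` F m) ->
  Ifam (\bigcup_n F n).
Hypothesis Ifam_exchange : forall I1 I2, Ifam I1 -> Ifam I2 -> (mu I1 < mu I2)%E ->
  exists I3, [/\ Ifam I3, I1 `<=` I3, I3 `<=` I1 `|` I2 & (mu I1 < mu I3)%E].

Lemma rank_fun_ub I A : Ifam I -> I `<=` A -> (mu I <= rank_fun mu Ifam A)%E.
Proof. by move=> II IA; apply: ereal_sup_ubound; exists I. Qed.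

Lemma rank_fun_maximal C U : Ifam U -> U `<=` C ->
  (forall L, Ifam L -> U `<=` L -> L `<=` C -> (mu L <= mu U)%E) ->
  rank_fun mu Ifam C = mu U.
Proof.
move=> IU UC Umax; apply/eqP; rewrite eq_le rank_fun_ub // andbT.
apply: ge_ereal_sup => _ [I [II IC] <-]; rewrite leNgt; apply/negP => UI.
have [I3 [II3 UI3 I3UI UI3lt]] := Ifam_exchange _ _ IU II UI.
have I3C : I3 `<=` C by move=> x /I3UI[/UC|/IC].
by move: UI3lt; rewrite ltNge Umax.
Qed.

Lemma exists_rank_basis C I : Ifam I -> I `<=` C ->
  exists U, [/\ Ifam U, I `<=` U, U `<=` C & mu U = rank_fun mu Ifam C].
Proof.
move=> II IC.
have [|||U [[IU UC] IsubU Umax]] :=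
  @exists_measure_maximal _ _ _ mu [set L | Ifam L /\ L `<=` C] _ _ I.
- by move=> K [/Ifam_measurable].
- move=> F IF Fnd; split; first exact: Ifam_nondecreasing_bigcup (fun n => (IF n).1) Fnd.
  by move=> x [n _ /(IF n).2].
- by [].
exists U; split => //; apply/esym/rank_fun_maximal => // L IL UL LC.
exact: Umax.
Qed.

End rank_fun.

Theorem lemma4p11 (R : realType) (d : measure_display) (J : measurableType d)
  (mu : {finite_measure set J -> \bar R}) (Ifam : set (set J)) :
  standard_borel R J ->
  (forall I, Ifam I -> measurable I) ->
  (* (I0) *)
  (forall I A, Ifam I -> measurable A -> A `<=` I -> Ifam A) ->
  (* (I1) *)
  (forall F : nat -> set J, (forall n, Ifam (F n)) ->
     (forall n m, (n <= m)%N -> F n `<=` F m) -> Ifam (\bigcup_n F n)) ->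
  (* (I2) *)
  (forall I1 I2, Ifam I1 -> Ifam I2 -> (mu I1 < mu I2)%E ->
     exists I3, [/\ Ifam I3, I1 `<=` I3, I3 `<=` I1 `|` I2 & (mu I1 < mu I3)%E]) ->
  forall A B : set J, measurable A -> measurable B ->
    (rank_fun mu Ifam (A `&` B) + rank_fun mu Ifam (A `|` B)
       <= rank_fun mu Ifam A + rank_fun mu Ifam B)%E.
Proof.
move=> _ Im I0 I1 I2 A B mA mB.
have [[I II]|noI] := pselect (exists I, Ifam I); last first.
  have rank_Ninfty C : rank_fun mu Ifam C = -oo%E.
    rewrite /rank_fun (_ : [set _ | _ in _] = set0) ?ereal_sup0 //.
    by apply/seteqP; split => // y [K [IK _] _]; apply: noI; exists K.
  by rewrite !rank_Ninfty.
have I_set0 : Ifam set0 := I0 I set0 II measurable0 (sub0set _).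
have [V [IV _ VAB <-]] := exists_rank_basis Im I1 I2 _ _ I_set0 (sub0set (A `&` B)).
have VAUB : V `<=` A `|` B by move=> x /VAB[Ax _]; left.
have [U [IU VU UAB <-]] := exists_rank_basis Im I1 I2 _ _ IV VAUB.
have mU := Im _ IU.
have mUA : measurable (U `&` A) by apply: measurableI.
have mUB : measurable (U `&` B) by apply: measurableI.
have UE : U = (U `&` A) `|` (U `&` B) by rewrite -setIUr; apply/esym/setIidl.
have V_le : (mu V <= mu ((U `&` A) `&` (U `&` B)))%E.
  apply: le_measure; rewrite ?inE; [exact: Im|exact: measurableI|].
  by move=> x Vx; have [Ax Bx] := VAB x Vx; have Ux := VU x Vx.
rewrite {1}UE; apply: (le_trans (leeD V_le (lexx _))).
rewrite addeC measureUI_fin //.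
by apply: leeD; apply: rank_fun_ub (@subIsetr _ _ _); apply: I0 IU _ _;
  [exact: mUA|exact: subIsetl|exact: mUB|exact: subIsetl].
Qed.
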